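(* For any boolean function $f:\{0,1\}^n\to\{0,1\}$ that depends on all $n$ input bits, $Q_E^{na}(f)\ge\lceil n/2\rceil$.
   Context: A function $f$ depends on bit $i$ if there is an $x$ with $f(x)\ne f(x+e_i)$, where $e_i$ is the bit string with 1 in position $i$ and 0 elsewhere, and addition is bitwise mod 2. Nonadaptive exact quantum query model: let $\mathcal H_{\rm in}$ have orthonormal basis $|0\rangle,\dots,|n\rangle$ and let the oracle $O_x$ act by $|i\rangle\mapsto(-1)^{x_i}|i\rangle$ with convention $x_0=0$. A nonadaptive quantum algorithm making $k$ queries consists of an input-independent state $|\psi\rangle\in\mathcal H_{\rm in}^{\otimes k}\otimes\mathcal H_{\rm work}$ (with $\mathcal H_{\rm work}$ a finite-dimensional workspace), to which $O_x^{\otimes k}\otimes I$ is applied, followed by an input-independent two-outcome measurement with outcomes labelled $0,1$. It computes $f$ exactly if for every $x$ the outcome is $f(x)$ with probability $1$. $Q_E^{na}(f)$ is the minimum such $k$. *)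

From HB Require Import structures.
From mathcomp Require Import all_boot all_order all_algebra.
Set Implicit Arguments. Unset Strict Implicit. Unset Printing Implicit Defensive.
Import Order.TTheory GRing.Theory Num.Theory.
Local Open Scope ring_scope.

Definition bits (n : nat) := {ffun 'I_n -> bool}.

Definition flip_bit (n : nat) (x : bits n) (i : 'I_n) : bits n :=
  [ffun j => if j == i then ~~ x j else x j].

Definition depends_on (n : nat) (f : bits n -> bool) (i : 'I_n) : Prop :=
  exists x : bits n, f x != f (flip_bit x i).

Definition depends_on_all (n : nat) (f : bits n -> bool) : Prop :=
  forall i : 'I_n, depends_on f i.

(* x_i for i in {0,...,n} with the convention x_0 = 0; index i >= 1 refers to
   the bit (i-1) of x : bits n. *)
Definition xbit (n : nat) (x : bits n) (i : 'I_n.+1) : bool :=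
  match unlift ord0 i with Some j => x j | None => false end.

(* Basis of H_in^{(x)k} (x) H_work, with dim H_in = n+1 and dim H_work = d. *)
Definition basis_idx (n k d : nat) := ({ffun 'I_k -> 'I_n.+1} * 'I_d)%type.

Definition apply_oracle (C : numClosedFieldType) (n k d : nat) (x : bits n)
  (psi : basis_idx n k d -> C) : basis_idx n k d -> C :=
  fun t => (-1) ^+ (\sum_(j < k) (xbit x (t.1 j) : nat)) * psi t.

Definition sesq (C : numClosedFieldType) (I : finType) (u : I -> C)
  (M : I -> I -> C) (v : I -> C) : C :=
  \sum_(i : I) \sum_(j : I) (u i)^* * M i j * v j.

Definition hermitian (C : numClosedFieldType) (I : finType) (M : I -> I -> C) :=
  forall i j, M i j = (M j i)^*.

Definition psd (C : numClosedFieldType) (I : finType) (M : I -> I -> C) :=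
  hermitian M /\ forall v : I -> C, 0 <= sesq v M v.

(* A two-outcome measurement is a POVM {E0, E1} with E0 + E1 = I; it is
   determined by the effect E1 with 0 <= E1 <= I, and E0 := I - E1. *)
Definition meas_op (C : numClosedFieldType) (I : finType) (E1 : I -> I -> C)
  (b : bool) : I -> I -> C :=
  if b then E1 else fun i j => (i == j)%:R - E1 i j.

Definition two_outcome_measurement (C : numClosedFieldType) (I : finType)
  (E1 : I -> I -> C) : Prop :=
  psd (meas_op E1 true) /\ psd (meas_op E1 false).

Definition outcome_prob (C : numClosedFieldType) (I : finType)
  (E1 : I -> I -> C) (psi : I -> C) (b : bool) : C :=
  sesq psi (meas_op E1 b) psi.

Definition unit_state (C : numClosedFieldType) (I : finType) (psi : I -> C) :=
  \sum_(i : I) (psi i)^* * psi i = 1.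

Definition na_exact (C : numClosedFieldType) (n : nat) (f : bits n -> bool)
  (k : nat) : Prop :=
  exists (d : nat) (psi : basis_idx n k d -> C) (E1 : basis_idx n k d -> basis_idx n k d -> C),
    [/\ unit_state psi, two_outcome_measurement E1 &
        forall x : bits n, outcome_prob E1 (apply_oracle x psi) (f x) = 1].

From Pilot Require Import Defs.
From HB Require Import structures.
From mathcomp Require Import all_boot all_order all_algebra.
From mathcomp Require Import ring zify.
Set Implicit Arguments. Unset Strict Implicit. Unset Printing Implicit Defensive.
Import Order.TTheory GRing.Theory Num.Theory.

(* Let psi be the initial state and p t = |psi t|^2 the weight of a basis
   vector t = (queried indices, workspace index).  If f depends on bit i, pick x
   with f x <> f (x + e_i): the measurement answers f x with certainty on
   O_x psi and the opposite bit with certainty on O_{x+e_i} psi, so these two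
   unit states are orthogonal.  Their overlap is sum_t p t (-1)^(c_i t), where
   c_i t counts the query registers of t holding index i, because the two
   oracles differ exactly on the phase of index i.  Hence
   sum_t p t (1 - (-1)^(c_i t)) = 1 for each of the n bits; summing over i and
   using 1 - (-1)^c <= 2c and sum_i c_i t <= k gives n <= 2k. *)

Local Open Scope ring_scope.

Section PerfectDiscrimination.
Variable C : numClosedFieldType.
Variable I : finType.

Definition inner (u v : I -> C) : C := \sum_i (u i)^* * v i.

Lemma sesq_expand (A : I -> I -> C) (l m : C) (v w : I -> C) :
  sesq (fun i => l * v i + m * w i) A (fun i => l * v i + m * w i) =
  l^* * l * sesq v A v + l^* * m * sesq v A w + m^* * l * sesq w A v
  + m^* * m * sesq w A w.
Proof.
rewrite /sesq !mulr_sumr -!big_split /=; apply: eq_bigr => i _.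
rewrite !mulr_sumr -!big_split /=; apply: eq_bigr => j _.
rewrite rmorphD !rmorphM /=; ring.
Qed.

Lemma sesq_hermitian (A : I -> I -> C) (v w : I -> C) :
  Defs.hermitian A -> sesq w A v = (sesq v A w)^*.
Proof.
move=> hA; rewrite /sesq raddf_sum /= exchange_big /=; apply: eq_bigr => i _.
rewrite raddf_sum /=; apply: eq_bigr => j _.
rewrite !rmorphM /= (hA j i) !conjCK.
by rewrite mulrAC [RHS]mulrAC [v i * _]mulrC.
Qed.

(* A psd form vanishing on v vanishes on every pair (w, v): test
   positivity on (c+1) v - a w with a = <w|A|v>, c = <w|A|w>, which
   evaluates to -|a|^2 (c + 2). *)
Lemma psd_null_vector (A : I -> I -> C) (v : I -> C) :
  Defs.psd A -> sesq v A v = 0 -> forall w, sesq w A v = 0.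
Proof.
move=> [hA pA] hv w.
set a := sesq w A v; set c := sesq w A w.
have c_ge0 : 0 <= c by apply: pA.
have c_real : c^* = c by apply/conj_Creal/ger0_real.
have conj_a : sesq v A w = a^* by rewrite (sesq_hermitian _ _ hA).
have := pA (fun i => (c + 1) * v i + (- a) * w i).
rewrite sesq_expand hv conj_a -/a -/c rmorphD /= c_real rmorph1 rmorphN /=.
have -> : (c + 1) * (c + 1) * 0 + (c + 1) * - a * a^* + - a^* * (c + 1) * a +
     - a^* * - a * c = - ((a * a^*) * (c + 2)) by ring.
rewrite oppr_ge0 => le0.
have /eqP : (a * a^*) * (c + 2) = 0.
  by apply/eqP; rewrite eq_le le0 mulr_ge0 ?mul_conjC_ge0 ?addr_ge0.
rewrite mulf_eq0 mul_conjC_eq0 => /orP [/eqP //|].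
by rewrite gt_eqF // ltr_wpDl.
Qed.

Lemma meas_op_sum (E1 : I -> I -> C) (w v : I -> C) :
  inner w v = sesq w (meas_op E1 true) v + sesq w (meas_op E1 false) v.
Proof.
rewrite /inner /sesq -big_split /=; apply: eq_bigr => i _.
rewrite -big_split /=.
rewrite (eq_bigr (fun j => (w i)^* * (i == j)%:R * v j)); last first.
  by move=> j _; rewrite -mulrDl -mulrDr addrC subrK.
rewrite (bigD1 i) //= eqxx mulr1 big1 ?addr0 // => j /negbTE.
by rewrite eq_sym => ->; rewrite mulr0 mul0r.
Qed.

Lemma perfectly_distinguished_orthogonal (E1 : I -> I -> C) (u v : I -> C)
    (b : bool) :
  two_outcome_measurement E1 -> inner u u = 1 -> inner v v = 1 ->
  outcome_prob E1 u b = 1 -> outcome_prob E1 v (~~ b) = 1 -> inner u v = 0.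
Proof.
move=> [psd_one psd_zero] uu vv; rewrite /outcome_prob => ub vb.
have psdE : forall b', Defs.psd (meas_op E1 b') by case.
have split_b : forall w z, inner w z =
    sesq w (meas_op E1 b) z + sesq w (meas_op E1 (~~ b)) z.
  by case: b {ub vb} => w z /=; rewrite (meas_op_sum E1) // addrC.
have u_not : sesq u (meas_op E1 (~~ b)) u = 0.
  by move: (split_b u u); rewrite uu ub => /eqP; rewrite eq_sym addrC -subr_eq0 addrK => /eqP.
have v_not : sesq v (meas_op E1 b) v = 0.
  by move: (split_b v v); rewrite vv vb => /eqP; rewrite eq_sym -subr_eq0 addrK => /eqP.
rewrite split_b (psd_null_vector (psdE b) v_not).
rewrite (sesq_hermitian _ _ (psdE (~~ b)).1) (psd_null_vector (psdE _) u_not).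
by rewrite rmorph0 addr0.
Qed.

End PerfectDiscrimination.

Section Oracle.
Variables (C : numClosedFieldType) (n k d : nat).

Lemma xbit_flip (x : bits n) (i : 'I_n) (m : 'I_n.+1) :
  xbit (flip_bit x i) m = xbit x m (+) (m == lift ord0 i).
Proof.
rewrite /xbit; case: (unliftP ord0 m) => [j ->|->].
  by rewrite (inj_eq lift_inj) /flip_bit ffunE; case: (j == i); case: (x j).
by rewrite (negbTE (neq_lift _ _)).
Qed.

Definition query_count (i : 'I_n) (q : {ffun 'I_k -> 'I_n.+1}) : nat :=
  \sum_(j < k) (q j == lift ord0 i : nat).

(* Each register holds at most one input index, so counts total at most k. *)
Lemma query_count_sum (q : {ffun 'I_k -> 'I_n.+1}) :
  (\sum_(i < n) query_count i q <= k)%N.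
Proof.
rewrite /query_count exchange_big /= -[X in (_ <= X)%N]card_ord -sum1_card.
apply: leq_sum => j _; case: (unliftP ord0 (q j)) => [i0 ->|->].
  rewrite (bigD1 i0) //= eqxx big1 // => i /negbTE.
  by rewrite eq_sym (inj_eq lift_inj) => ->.
by rewrite big1 // => i _; rewrite (negbTE (neq_lift _ _)).
Qed.

Lemma sign_even (m : nat) : (-1) ^+ (2 * m) = 1 :> C.
Proof. by rewrite exprM sqrrN !expr1n. Qed.

Lemma conj_sign (m : nat) : ((-1) ^+ m)^* = (-1) ^+ m :> C.
Proof. by rewrite rmorphXn /= rmorphN1. Qed.

(* The oracle is a diagonal sign matrix, hence preserves the norm. *)
Lemma oracle_norm (x : bits n) (psi : basis_idx n k d -> C) :
  inner (apply_oracle x psi) (apply_oracle x psi) = inner psi psi.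
Proof.
apply: eq_bigr => t _; rewrite /apply_oracle rmorphM /= conj_sign.
by rewrite mulrACA -exprD addnn -mul2n sign_even mul1r.
Qed.

(* The overlap of O_x psi and O_{x+e_i} psi: phases agree except on index i,
   which contributes (-1) per register holding it. *)
Lemma oracle_overlap (x : bits n) (i : 'I_n) (psi : basis_idx n k d -> C) :
  inner (apply_oracle x psi) (apply_oracle (flip_bit x i) psi)
  = \sum_t (psi t)^* * psi t * (-1) ^+ (query_count i t.1).
Proof.
apply: eq_bigr => t _; rewrite /apply_oracle rmorphM /= conj_sign.
rewrite mulrACA -exprD -big_split /=.
have -> : \sum_(j < k) ((xbit x (t.1 j) : nat) + xbit (flip_bit x i) (t.1 j))%N
  = (query_count i t.1
     + 2 * \sum_(j < k) (xbit x (t.1 j) && (t.1 j != lift ord0 i) : nat))%N.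
  rewrite /query_count big_distrr -big_split /=; apply: eq_bigr => j _.
  by rewrite xbit_flip; case: (xbit x _); case: (_ == _).
by rewrite exprD sign_even mulr1 mulrC.
Qed.

End Oracle.

(* 1 - (-1)^c is 0 or 2, and 2 only when c >= 1. *)
Lemma one_sub_sign_le (R : numDomainType) (c : nat) :
  1 - (-1) ^+ c <= (2 * c)%:R :> R.
Proof.
rewrite -signr_odd; case: c => [|c]; first by rewrite /= subrr.
case: (odd c.+1) => /=; last by rewrite expr0 subrr ler0n.
by rewrite expr1 opprK (_ : 1 + 1 = 2%:R :> R) ?ler_nat //; lia.
Qed.

Lemma balanced_signs_bound (R : numDomainType) (T : finType) (n k : nat)
    (p : T -> R) (c : 'I_n -> T -> nat) :
  (forall t, 0 <= p t) -> \sum_t p t = 1 ->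
  (forall t, (\sum_i c i t <= k)%N) ->
  (forall i, \sum_t p t * (-1) ^+ (c i t) = 0) -> (n <= 2 * k)%N.
Proof.
move=> p_ge0 p_sum c_sum mean0.
have n_eq : n%:R = \sum_(i < n) \sum_t p t * (1 - (-1) ^+ (c i t)) :> R.
  rewrite -[in LHS](card_ord n) -sumr_const; apply: eq_bigr => i _.
  under eq_bigr do rewrite mulrBr mulr1.
  by rewrite sumrB mean0 p_sum subr0.
rewrite -(ler_nat R) n_eq.
apply: (@le_trans _ _ (\sum_(i < n) \sum_t p t * (2 * c i t)%:R)).
  apply: ler_sum => i _; apply: ler_sum => t _.
  by rewrite ler_wpM2l // one_sub_sign_le.
rewrite exchange_big /=.
apply: (@le_trans _ _ (\sum_t p t * (2 * k)%:R)).
  apply: ler_sum => t _; rewrite -mulr_sumr ler_wpM2l // -natr_sum ler_nat.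
  by rewrite -big_distrr /= leq_mul2l c_sum orbT.
by rewrite -mulr_suml p_sum mul1r.
Qed.

Local Close Scope ring_scope.

Theorem corollary7p5 (C : numClosedFieldType) (n : nat) (f : bits n -> bool) :
  depends_on_all f -> forall k : nat, na_exact C f k -> uphalf n <= k.
Proof.
move=> depends k [d [psi [E1 [psi_unit meas correct]]]].
have overlap0 : forall i : 'I_n,
    (\sum_t (psi t)^* * psi t * (-1) ^+ (query_count i t.1) = 0)%R.
  move=> i; have [x fx_neq] := depends i.
  have flip_val : f (flip_bit x i) = ~~ f x.
    by move: fx_neq; case: (f x); case: (f _).
  rewrite -(oracle_overlap x).
  apply: (perfectly_distinguished_orthogonal (b := f x) meas).
  - by rewrite oracle_norm.
  - by rewrite oracle_norm.
  - exact: correct.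
  - by rewrite -flip_val correct.
rewrite leq_uphalf_double -mul2n.
apply: (balanced_signs_bound (p := fun t => (psi t)^* * psi t)%R) overlap0.
- by move=> t; rewrite mulrC mul_conjC_ge0.
- exact: psi_unit.
- by move=> t; apply: query_count_sum.
Qed.
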